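(* Let $\alpha>0$, $n\ge 3$. Let $w$ solve \[ w''+\frac{n-1}{t}w'+t^{\alpha}e^{w}=0,\qquad w(0)=0,\quad w'(0)=0, \] let $w_0(t)=\ln\bigl((2+\alpha)(n-2)\bigr)-(2+\alpha)\ln t$, and set $p(t)=w(t)-w_0(t)$. Let $t_0\in(0,\infty)$ and let $z$ be the solution of the Euler equation \[ z''+\frac{n-1}{t}z'+\frac{(2+\alpha)(n-2)}{t^2}z=0 \] with $z(t_0)=p(t_0)$ and $z'(t_0)=p'(t_0)$. If $z(t)<0$ on $(t_0,\infty)$, then $p(t)<0$ on $(t_0,\infty)$.
   Context: The solution $w$ is defined for all $t>0$. The function $w_0$ solves the same differential equation as $w$ for $t>0$. *)

From Stdlib Require Import Reals.
From Coquelicot Require Import Coquelicot.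
Open Scope R_scope.

Definition w0 (alpha : R) (n : nat) (t : R) : R :=
  ln ((2 + alpha) * (INR n - 2)) - (2 + alpha) * ln t.

From Stdlib Require Import Reals Lra Psatz.
From Coquelicot Require Import Coquelicot.
Open Scope R_scope.

(* With K = (2 + alpha)(n - 2), the function w0 is the singular solution: t^alpha e^(w0) = K / t^2.
   Hence p = w - w0 solves p'' + (n-1)/t p' + K/t^2 p = K/t^2 (1 + p - e^p), the Euler equation
   with a forcing term that is <= 0.  Where z < 0 the forcing times z is >= 0, so the weighted
   Wronskian t^(n-1) (p' z - p z') is nondecreasing; it vanishes at t0 because p and z have the
   same data there.  Thus p / z is nondecreasing on (t0, oo), and since p and z agree to first
   order at t0 this gives p <= z < 0.  The degenerate case z(t0) = z'(t0) = 0 is excluded by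
   uniqueness for the linear Euler equation (an energy estimate). *)

Lemma le_of_is_derive_nonneg (f df : R -> R) (a b : R) :
  a <= b ->
  (forall x, a <= x <= b -> is_derive f x (df x)) ->
  (forall x, a < x < b -> 0 <= df x) ->
  f a <= f b.
Proof.
  intros Hab Hf Hdf.
  destruct (Rle_lt_or_eq_dec a b Hab) as [Hlt | <-]; [| lra].
  destruct (MVT_cor2 f df a b Hlt) as [c [Hmvt Hc]].
  { intros c Hc. apply is_derive_Reals, Hf, Hc. }
  specialize (Hdf c Hc). nra.
Qed.

Lemma continuous_right_lower_bound (f : R -> R) (x y c : R) :
  continuous f x -> x < y ->
  (forall s, x < s < y -> c <= f s) -> c <= f x.
Proof.
  intros Hf Hxy Hc.
  apply (filterlim_le (F := at_right x) (fun _ => c) f c (f x)).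
  - assert (Hd : 0 < y - x) by lra.
    exists (mkposreal (y - x) Hd). intros s Hs Hxs. apply Hc.
    apply Rabs_lt_between' in Hs. simpl in Hs. lra.
  - apply filterlim_const.
  - exact (filterlim_filter_le_1 _ (filter_le_within (F := locally x) _) Hf).
Qed.

Lemma is_derive_nonneg_of_right_min (f : R -> R) (x y l : R) :
  is_derive f x l -> x < y ->
  (forall s, x < s < y -> f x <= f s) -> 0 <= l.
Proof.
  intros Hf Hxy Hmin. apply Rnot_lt_le. intros Hl.
  apply is_derive_Reals in Hf.
  destruct (Hf (- l)) as [delta Hdelta]; [lra |].
  set (h := Rmin delta (y - x) / 2).
  assert (Hh : 0 < h /\ h < delta /\ x + h < y).
  { pose proof (cond_pos delta). pose proof (Rmin_l delta (y - x)).
    pose proof (Rmin_r delta (y - x)). pose proof (Rmin_pos delta (y - x)).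
    unfold h. lra. }
  specialize (Hdelta h ltac:(lra) ltac:(rewrite Rabs_pos_eq; lra)).
  specialize (Hmin (x + h) ltac:(lra)).
  apply Rabs_def2 in Hdelta.
  assert (0 <= (f (x + h) - f x) / h) by (apply Rdiv_le_0_compat; lra).
  lra.
Qed.

Definition wronskian (u u1 v v1 : R -> R) (t : R) : R := u1 t * v t - u t * v1 t.

Lemma div_le_div_of_wronskian_nonneg (u u1 v v1 : R -> R) (a b : R) :
  a <= b ->
  (forall t, a <= t <= b -> is_derive u t (u1 t)) ->
  (forall t, a <= t <= b -> is_derive v t (v1 t)) ->
  (forall t, a <= t <= b -> v t <> 0) ->
  (forall t, a < t < b -> 0 <= wronskian u u1 v v1 t) ->
  u a / v a <= u b / v b.
Proof.
  intros Hab Hu Hv Hv0 HW.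
  apply (le_of_is_derive_nonneg (fun t => u t / v t)
           (fun t => wronskian u u1 v v1 t / v t ^ 2) a b Hab).
  - intros t Ht. apply is_derive_div; auto.
  - intros t Ht. apply Rdiv_le_0_compat; [auto |].
    apply pow2_gt_0, Hv0. lra.
Qed.

Lemma sturm_comparison (u u1 v v1 : R -> R) (t0 t1 : R) :
  t0 < t1 ->
  (forall t, t0 <= t <= t1 -> is_derive u t (u1 t)) ->
  (forall t, t0 <= t <= t1 -> is_derive v t (v1 t)) ->
  u t0 = v t0 -> u1 t0 = v1 t0 -> ~ (v t0 = 0 /\ v1 t0 = 0) ->
  (forall t, t0 < t <= t1 -> v t < 0) ->
  (forall t, t0 < t <= t1 -> 0 <= wronskian u u1 v v1 t) ->
  u t1 <= v t1.
Proof.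
  intros Ht Hu Hv Hu0 Hu1 Hv00 Hvneg HW.
  apply Rnot_lt_le. intros Huv.
  pose proof (Hvneg t1 ltac:(lra)) as Hvt1.
  set (r := u t1 / v t1).
  assert (Hr : r < 1).
  { assert (r * v t1 = u t1) by (unfold r; field; lra). nra. }
  set (h := fun t => u t - r * v t).
  assert (Dh : forall t, t0 <= t <= t1 -> is_derive h t (u1 t - r * v1 t)).
  { intros t Ht'. apply (is_derive_minus u (fun s => r * v s)); [auto |].
    apply is_derive_scal; auto. }
  assert (Dnv : forall t, t0 <= t <= t1 -> is_derive (fun s => - v s) t (- v1 t)).
  { intros t Ht'. apply (is_derive_opp v), Hv, Ht'. }
  assert (Hv0 : v t0 <= 0).
  { enough (0 <= - v t0) by lra.
    apply (continuous_right_lower_bound (fun s => - v s) t0 t1 0); [| lra |].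
    - apply (ex_derive_continuous (fun s => - v s)). exists (- v1 t0). apply Dnv. lra.
    - intros s Hs. pose proof (Hvneg s ltac:(lra)). lra. }
  (* [u / v] is nondecreasing and equals [r] at [t1], so [h = u - r v >= 0] on [(t0, t1)];
     as [h t0 = (1 - r) v t0 <= 0], this forces [v t0 = 0] and then [v' t0 = 0]. *)
  assert (Hh : forall s, t0 < s < t1 -> 0 <= h s).
  { intros s Hs. pose proof (Hvneg s ltac:(lra)).
    assert (u s / v s <= r).
    { apply (div_le_div_of_wronskian_nonneg u u1 v v1 s t1); try lra;
        intros t Ht'; try apply Hu; try apply Hv; try apply HW; try lra.
      pose proof (Hvneg t ltac:(lra)). lra. }
    assert (u s / v s * v s = u s) by (field; lra).
    unfold h. nra. }
  assert (Hvt0 : v t0 = 0).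
  { enough (0 <= h t0) by (unfold h in *; nra).
    apply (continuous_right_lower_bound h t0 t1 0); [| lra | exact Hh].
    apply (ex_derive_continuous h). exists (u1 t0 - r * v1 t0). apply Dh. lra. }
  apply Hv00. split; [exact Hvt0 |].
  apply Rle_antisym.
  - enough (0 <= - v1 t0) by lra.
    apply (is_derive_nonneg_of_right_min (fun s => - v s) t0 t1); [apply Dnv; lra | lra |].
    intros s Hs. pose proof (Hvneg s ltac:(lra)). lra.
  - enough (0 <= u1 t0 - r * v1 t0) by nra.
    apply (is_derive_nonneg_of_right_min h t0 t1); [apply Dh; lra | lra |].
    intros s Hs. specialize (Hh s Hs). unfold h in *. nra.
Qed.

Lemma linear_ode2_zero_data (y y1 y2 a b : R -> R) (t0 t1 A B : R) :
  t0 <= t1 ->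
  (forall t, t0 <= t <= t1 -> is_derive y t (y1 t)) ->
  (forall t, t0 <= t <= t1 -> is_derive y1 t (y2 t)) ->
  (forall t, t0 <= t <= t1 -> y2 t = a t * y1 t + b t * y t) ->
  (forall t, t0 <= t <= t1 -> Rabs (a t) <= A /\ Rabs (b t) <= B) ->
  y t0 = 0 -> y1 t0 = 0 -> y t1 = 0.
Proof.
  intros Ht Hy Hy1 Hode Hab Hy0 Hy10.
  set (C := 1 + B + 2 * A).
  set (Q := fun t => y t * y t + y1 t * y1 t).
  set (E := fun t => Q t * exp (- C * t)).
  assert (Dexp : forall t, is_derive (fun s => exp (- C * s)) t (- C * exp (- C * t))).
  { intros t. auto_derive; [easy | ring]. }
  (* [E] is nonincreasing because [C] dominates [1 + |b| + 2 |a|], and [E t0 = 0]. *)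
  assert (HE : - E t0 <= - E t1).
  { apply (le_of_is_derive_nonneg (fun t => - E t)
      (fun t => - ((y1 t * y t + y t * y1 t + (y2 t * y1 t + y1 t * y2 t)) * exp (- C * t)
                   + Q t * (- C * exp (- C * t)))) t0 t1 Ht).
    - intros t Ht'. apply (is_derive_opp E).
      apply (is_derive_mult Q (fun s => exp (- C * s))); [| apply Dexp | intros; apply Rmult_comm].
      apply (is_derive_plus (fun s => y s * y s) (fun s => y1 s * y1 s));
        [apply (is_derive_mult y y) | apply (is_derive_mult y1 y1)];
        try (intros; apply Rmult_comm); auto.
    - intros t Ht'.
      destruct (Hab t ltac:(lra)) as [Ha Hb].
      apply Rabs_le_between in Ha, Hb.
      rewrite Hode by lra. unfold Q.
      pose proof (exp_pos (- C * t)).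
      assert (0 <= (2 + B + b t) * (y t - y1 t) ^ 2)
        by (apply Rmult_le_pos; [lra | apply pow2_ge_0]).
      assert (0 <= (B - b t) * (y t + y1 t) ^ 2)
        by (apply Rmult_le_pos; [lra | apply pow2_ge_0]).
      assert (0 <= (A - a t) * y1 t ^ 2 + A * y t ^ 2 + A * y1 t ^ 2) by nra.
      assert (HS : 2 * y t * y1 t + 2 * y1 t * (a t * y1 t + b t * y t)
                   - C * (y t * y t + y1 t * y1 t) <= 0) by (unfold C; nra).
      set (S := 2 * y t * y1 t + 2 * y1 t * (a t * y1 t + b t * y t)
                - C * (y t * y t + y1 t * y1 t)) in HS.
      set (e := exp (- C * t)) in *.
      replace (- _) with (- S * e) by (unfold S; ring).
      nra. }
  assert (HQ0 : Q t0 = 0) by (unfold Q; rewrite Hy0, Hy10; ring).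
  unfold E in HE. rewrite HQ0 in HE.
  pose proof (exp_pos (- C * t1)).
  assert (Q t1 <= 0) by nra.
  unfold Q in *. nra.
Qed.

Section Wronskian.

Variables (m : R) (k f u u1 u2 v v1 v2 : R -> R).
Hypothesis Hu : forall t, 0 < t -> is_derive u t (u1 t).
Hypothesis Hu1 : forall t, 0 < t -> is_derive u1 t (u2 t).
Hypothesis Hv : forall t, 0 < t -> is_derive v t (v1 t).
Hypothesis Hv1 : forall t, 0 < t -> is_derive v1 t (v2 t).
Hypothesis Hu_ode : forall t, 0 < t -> u2 t + m / t * u1 t + k t * u t = f t.
Hypothesis Hv_ode : forall t, 0 < t -> v2 t + m / t * v1 t + k t * v t = 0.

Lemma is_derive_weighted_wronskian (t : R) : 0 < t ->
  is_derive (fun s => Rpower s m * wronskian u u1 v v1 s) t (Rpower t m * (f t * v t)).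
Proof.
  intros Ht.
  assert (Hd : is_derive (fun s => Rpower s m * wronskian u u1 v v1 s) t
    (m * Rpower t (m - 1) * wronskian u u1 v v1 t
     + Rpower t m * ((u2 t * v t + u1 t * v1 t) - (u1 t * v1 t + u t * v2 t)))).
  { apply (is_derive_mult (fun s => Rpower s m) (wronskian u u1 v v1));
      [| | intros; apply Rmult_comm].
    - apply is_derive_Reals, derivable_pt_lim_power, Ht.
    - apply (is_derive_minus (fun s => u1 s * v s) (fun s => u s * v1 s));
        [apply (is_derive_mult u1 v) | apply (is_derive_mult u v1)];
        auto; intros; apply Rmult_comm. }
  assert (Hpow : Rpower t m = Rpower t (m - 1) * t).
  { rewrite <- (Rpower_1 t Ht) at 3. rewrite <- Rpower_plus. f_equal. ring. }
  replace (Rpower t m * (f t * v t)) with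
    (m * Rpower t (m - 1) * wronskian u u1 v v1 t
     + Rpower t m * ((u2 t * v t + u1 t * v1 t) - (u1 t * v1 t + u t * v2 t))); [exact Hd |].
  rewrite <- (Hu_ode t Ht).
  replace (v2 t) with (- (m / t * v1 t) - k t * v t) by (pose proof (Hv_ode t Ht); lra).
  rewrite Hpow. unfold wronskian. field. lra.
Qed.

Lemma wronskian_nonneg (a b : R) : 0 < a <= b ->
  (forall t, a < t < b -> 0 <= f t * v t) ->
  0 <= wronskian u u1 v v1 a -> 0 <= wronskian u u1 v v1 b.
Proof.
  intros Hab Hfv HWa.
  assert (Rpower a m * wronskian u u1 v v1 a <= Rpower b m * wronskian u u1 v v1 b).
  { apply (le_of_is_derive_nonneg (fun t => Rpower t m * wronskian u u1 v v1 t)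
      (fun t => Rpower t m * (f t * v t)) a b); [lra | |].
    - intros t Ht. apply is_derive_weighted_wronskian. lra.
    - intros t Ht. apply Rmult_le_pos; [apply Rlt_le, exp_pos | auto]. }
  pose proof (exp_pos (m * ln a)). pose proof (exp_pos (m * ln b)).
  unfold Rpower in *. nra.
Qed.

End Wronskian.

Lemma euler_ode_zero_data (c1 c0 : R) (z z1 z2 : R -> R) (t0 t1 : R) :
  0 < t0 <= t1 ->
  (forall t, 0 < t -> is_derive z t (z1 t)) ->
  (forall t, 0 < t -> is_derive z1 t (z2 t)) ->
  (forall t, 0 < t -> z2 t + c1 / t * z1 t + c0 / t ^ 2 * z t = 0) ->
  z t0 = 0 -> z1 t0 = 0 -> z t1 = 0.
Proof.
  intros Ht Hz Hz1 Hode.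
  apply (linear_ode2_zero_data z z1 z2 (fun t => - (c1 / t)) (fun t => - (c0 / t ^ 2))
           t0 t1 (Rabs c1 / t0) (Rabs c0 / t0 ^ 2)); try lra.
  - intros t Ht'. apply Hz. lra.
  - intros t Ht'. apply Hz1. lra.
  - intros t Ht'. pose proof (Hode t ltac:(lra)). lra.
  - intros t Ht'. pose proof (pow_lt t 2 ltac:(lra)).
    rewrite !Rabs_Ropp, !Rabs_div, !(Rabs_pos_eq t), !(Rabs_pos_eq (t ^ 2)) by lra.
    split; apply Rmult_le_compat_l; try apply Rabs_pos; apply Rinv_le_contravar;
      try apply pow_incr; try apply pow_lt; lra.
Qed.

Lemma is_derive_w0 (alpha : R) (n : nat) (t : R) : 0 < t ->
  is_derive (w0 alpha n) t (- (2 + alpha) / t).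
Proof. intros Ht. unfold w0. auto_derive; [exact Ht | field; lra]. Qed.

Lemma Rpower_mul_exp_w0 (alpha : R) (n : nat) (t : R) :
  0 < t -> 0 < (2 + alpha) * (INR n - 2) ->
  Rpower t alpha * exp (w0 alpha n t) = (2 + alpha) * (INR n - 2) / t ^ 2.
Proof.
  intros Ht HK. unfold w0, Rpower, Rminus.
  rewrite exp_plus, exp_ln by exact HK.
  replace (- ((2 + alpha) * ln t)) with (- (alpha * ln t) + - ln (t ^ 2))
    by (rewrite ln_pow by exact Ht; simpl INR; ring).
  rewrite exp_plus, !exp_Ropp, exp_ln by (apply pow_lt; exact Ht).
  field. split; [lra | apply Rgt_not_eq, exp_pos].
Qed.

Lemma sub_w0_ode (alpha : R) (n : nat) (t x x1 x2 : R) :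
  0 < t -> 0 < (2 + alpha) * (INR n - 2) ->
  x2 + (INR n - 1) / t * x1 + Rpower t alpha * exp x = 0 ->
  (x2 - (2 + alpha) / t ^ 2) + (INR n - 1) / t * (x1 + (2 + alpha) / t)
    + (2 + alpha) * (INR n - 2) / t ^ 2 * (x - w0 alpha n t)
  = (2 + alpha) * (INR n - 2) / t ^ 2 * (1 + (x - w0 alpha n t) - exp (x - w0 alpha n t)).
Proof.
  intros Ht HK Hode.
  assert (Hsplit : Rpower t alpha * exp x
                   = (2 + alpha) * (INR n - 2) / t ^ 2 * exp (x - w0 alpha n t)).
  { rewrite <- (Rpower_mul_exp_w0 alpha n t Ht HK), Rmult_assoc, <- exp_plus.
    do 2 f_equal. ring. }
  replace x2 with (- ((INR n - 1) / t * x1) - Rpower t alpha * exp x) by lra.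
  rewrite Hsplit. field. lra.
Qed.

Lemma is_derive_sub_w0 (alpha : R) (n : nat) (w w1 : R -> R) (t : R) :
  0 < t -> is_derive w t (w1 t) ->
  is_derive (fun s => w s - w0 alpha n s) t (w1 t + (2 + alpha) / t).
Proof.
  intros Ht Hw. replace ((2 + alpha) / t) with (- (- (2 + alpha) / t)) by (field; lra).
  apply (is_derive_minus w (w0 alpha n)); [exact Hw | apply is_derive_w0, Ht].
Qed.

Lemma is_derive_add_div (c : R) (f f1 : R -> R) (t : R) :
  t <> 0 -> is_derive f t (f1 t) ->
  is_derive (fun s => f s + c / s) t (f1 t - c / t ^ 2).
Proof.
  intros Ht Hf. unfold Rminus. apply (is_derive_plus f (fun s => c / s)); [exact Hf |].
  auto_derive; [exact Ht | field; exact Ht].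
Qed.

Theorem lemma3p5
  (alpha : R) (n : nat) (w w1 w2 z z1 z2 : R -> R) (t0 : R)
  (Halpha : 0 < alpha) (Hn : (3 <= n)%nat)
  (* w is a solution defined for all t > 0, with w' = w1, w'' = w2 *)
  (Hw1 : forall t, 0 < t -> is_derive w t (w1 t))
  (Hw2 : forall t, 0 < t -> is_derive w1 t (w2 t))
  (Hode : forall t, 0 < t ->
     w2 t + (INR n - 1) / t * w1 t + Rpower t alpha * exp (w t) = 0)
  (* initial conditions w(0) = 0, w'(0) = 0 (as right limits at 0) *)
  (Hw0 : filterlim w (at_right 0) (locally 0))
  (Hw10 : filterlim w1 (at_right 0) (locally 0))
  (Ht0 : 0 < t0)
  (* z solves the Euler equation on (0, oo) *)
  (Hz1 : forall t, 0 < t -> is_derive z t (z1 t))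
  (Hz2 : forall t, 0 < t -> is_derive z1 t (z2 t))
  (Hzode : forall t, 0 < t ->
     z2 t + (INR n - 1) / t * z1 t
       + (2 + alpha) * (INR n - 2) / (t ^ 2) * z t = 0)
  (* z(t0) = p(t0), z'(t0) = p'(t0), where p = w - w0, w0'(t) = -(2+alpha)/t *)
  (Hzt0 : z t0 = w t0 - w0 alpha n t0)
  (Hz1t0 : z1 t0 = w1 t0 + (2 + alpha) / t0)
  (Hzneg : forall t, t0 < t -> z t < 0) :
  forall t, t0 < t -> w t - w0 alpha n t < 0.
Proof.
  intros t1 Ht1.
  set (K := (2 + alpha) * (INR n - 2)).
  assert (HK : 0 < K) by (apply le_INR in Hn; simpl INR in Hn; unfold K; nra).
  set (p := fun t => w t - w0 alpha n t).
  set (p1 := fun t => w1 t + (2 + alpha) / t).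
  set (p2 := fun t => w2 t - (2 + alpha) / t ^ 2).
  assert (Dp : forall t, 0 < t -> is_derive p t (p1 t)).
  { intros t Ht. apply is_derive_sub_w0; auto. }
  assert (Dp1 : forall t, 0 < t -> is_derive p1 t (p2 t)).
  { intros t Ht. apply is_derive_add_div; [lra | auto]. }
  enough (p t1 <= z t1) by (specialize (Hzneg t1 Ht1); unfold p in *; lra).
  apply (sturm_comparison p p1 z z1 t0 t1).
  - exact Ht1.
  - intros t Ht. apply Dp. lra.
  - intros t Ht. apply Hz1. lra.
  - unfold p. lra.
  - unfold p1. lra.
  - intros [Hz0 Hz10]. pose proof (Hzneg t1 Ht1).
    pose proof (euler_ode_zero_data _ _ z z1 z2 t0 t1 ltac:(lra) Hz1 Hz2 Hzode Hz0 Hz10). lra.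
  - intros t Ht. apply Hzneg. lra.
  - intros t Ht.
    apply (wronskian_nonneg (INR n - 1) (fun s => K / s ^ 2)
             (fun s => K / s ^ 2 * (1 + p s - exp (p s))) p p1 p2 z z1 z2 Dp Dp1 Hz1 Hz2)
      with (a := t0); try lra.
    + intros s Hs. exact (sub_w0_ode alpha n s (w s) (w1 s) (w2 s) Hs HK (Hode s Hs)).
    + exact Hzode.
    + intros s Hs. pose proof (exp_ineq1_le (p s)). pose proof (Hzneg s ltac:(lra)).
      assert (0 < K / s ^ 2) by (apply Rdiv_lt_0_compat; [lra | apply pow_lt; lra]).
      cbv beta. rewrite Rmult_assoc. apply Rmult_le_pos; nra.
    + unfold wronskian, p, p1. rewrite Hzt0, Hz1t0. lra.
Qed.
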